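(* Let $N\ge1$, $\beta$ a non-negative integer and $\gamma$ a constant. For every $Q$ in the algebra $\mathcal{H}_0'$ and every $f\in\mathbb{C}[x_1,\dots,x_N]$, $$\sigma^B(Qf)=\rho^B(Q)\,\sigma^B(f).$$
   Context: On $\mathbb{C}[x]=\mathbb{C}[x_1,\dots,x_N]$: $s_{ij}$ swaps $x_i,x_j$; $D^A_j=\frac{\partial}{\partial x_j}+\beta\sum_{k\neq j}\frac{1-s_{jk}}{x_j-x_k}$; $\hat D^A_j=x_jD^A_j+\beta\sum_{k<j}s_{jk}$; $\mathcal{H}_0'$ is the operator algebra generated by the $\hat D^A_j$ and $s_{ij}$, and $\widetilde{\mathcal H}'$ the one generated by the $x_j$, $\hat D^A_j$, $s_{ij}$. On functions of $z=(z_1,\dots,z_N)$: $s_{ij}$ swaps $z_i,z_j$; $t_j$ sends $z_j\mapsto -z_j$; $D^B_j=\frac{\partial}{\partial z_j}+\beta\sum_{k\neq j}\left(\frac{1-s_{jk}}{z_j-z_k}+\frac{1-t_jt_ks_{jk}}{z_j+z_k}\right)+\gamma\frac{1-t_j}{z_j}$; $\tilde b^\dagger_j=\frac1{\sqrt2}(-D^B_j+2z_j)$, $\tilde b_j=\frac1{\sqrt2}D^B_j$; $\tilde h^B_j=\tilde b^\dagger_j\tilde b_j+\beta\sum_{k<j}(s_{jk}+t_jt_ks_{jk})$. The operators $(\tilde b^\dagger_j)^2$ and $\tilde h^B_j$ preserve $\mathbb{C}[z^2]=\mathbb{C}[z_1^2,\dots,z_N^2]$. $\rho^B$ is the representation of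 $\widetilde{\mathcal H}'$ on $\mathbb{C}[z^2]$ determined by $\rho^B(x_j)=\tfrac12(\tilde b^\dagger_j)^2$, $\rho^B(\hat D^A_j)=\tfrac12\tilde h^B_j$, $\rho^B(s_{ij})=s_{ij}$. The linear map $\sigma^B:\mathbb{C}[x]\to\mathbb{C}[z^2]$ is $\sigma^B(f)=f\big((\tilde b^\dagger_1)^2/2,\dots,(\tilde b^\dagger_N)^2/2\big)\cdot1$. *)

From HB Require Import structures.
From mathcomp Require Import all_boot all_order all_algebra.
From mathcomp Require Import all_fingroup mpoly.
From Stdlib Require Import ClassicalEpsilon.
Set Implicit Arguments. Unset Strict Implicit. Unset Printing Implicit Defensive.
Import Order.TTheory GRing.Theory Num.Theory.
Local Open Scope ring_scope.

Section Ops.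
Variables (C : numClosedFieldType) (N : nat) (beta : nat) (gamma : C).

Notation P := {mpoly C[N]}.

Definition exdiv (d p : P) : P := epsilon (inhabits 0) (fun q => d * q = p).

Definition sw (i j : 'I_N) (p : P) : P := msym (tperm i j) p.

Definition tflip (j : 'I_N) (p : P) : P :=
  p \mPo [tuple (if i == j then - 'X_i else 'X_i) | i < N].

Definition DA (j : 'I_N) (f : P) : P :=
  mderiv j f + beta%:R *: \sum_(k < N | k != j) exdiv ('X_j - 'X_k) (f - sw j k f).

Definition hatDA (j : 'I_N) (f : P) : P :=
  'X_j * DA j f + beta%:R *: \sum_(k < N | (k < j)%N) sw j k f.

Definition DB (j : 'I_N) (f : P) : P :=
  mderiv j f
  + beta%:R *: \sum_(k < N | k != j)
       (exdiv ('X_j - 'X_k) (f - sw j k f)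
        + exdiv ('X_j + 'X_k) (f - tflip j (tflip k (sw j k f))))
  + gamma *: exdiv 'X_j (f - tflip j f).

Definition bdag (j : 'I_N) (f : P) : P :=
  (sqrtC 2)^-1 *: (- DB j f + 2%:R *: ('X_j * f)).

Definition bann (j : 'I_N) (f : P) : P := (sqrtC 2)^-1 *: DB j f.

Definition hB (j : 'I_N) (f : P) : P :=
  bdag j (bann j f)
  + beta%:R *: \sum_(k < N | (k < j)%N) (sw j k f + tflip j (tflip k (sw j k f))).

(* rho^B(x_j) = (bdag_j)^2 / 2 *)
Definition bdag2half (j : 'I_N) (f : P) : P := 2%:R^-1 *: bdag j (bdag j f).

(* sigma^B f = f((bdag_1)^2/2, ..., (bdag_N)^2/2) . 1 *)
Definition mono_op (m : 'X_{1..N}) (g : P) : P :=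
  foldr (fun j acc => iter (m j) (bdag2half j) acc) g (enum 'I_N).

Definition sigmaB (f : P) : P := \sum_(m <- msupp f) f@_m *: mono_op m 1.

(* Elements of the algebra H_0' : formal expressions (linear combinations of
   products) in the generators hatD^A_j and s_ij. *)
Inductive H0expr : Type :=
| HgenD of 'I_N
| Hgens of 'I_N & 'I_N
| Hone
| Hadd of H0expr & H0expr
| Hscale of C & H0expr
| Hmul of H0expr & H0expr.

Fixpoint actA (e : H0expr) (f : P) : P :=
  match e with
  | HgenD j => hatDA j f
  | Hgens i j => sw i j f
  | Hone => f
  | Hadd a b => actA a f + actA b f
  | Hscale c a => c *: actA a f
  | Hmul a b => actA a (actA b f)
  end.

Fixpoint rhoB (e : H0expr) (g : P) : P :=
  match e with
  | HgenD j => 2%:R^-1 *: hB j g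
  | Hgens i j => sw i j g
  | Hone => g
  | Hadd a b => rhoB a g + rhoB b g
  | Hscale c a => c *: rhoB a g
  | Hmul a b => rhoB a (rhoB b g)
  end.

End Ops.

From HB Require Import structures.
From mathcomp Require Import all_boot all_order all_algebra.
From mathcomp Require Import all_fingroup mpoly.
From mathcomp.algebra_tactics Require Import ring.
From mathcomp Require Import zify.
From Stdlib Require Import ClassicalEpsilon.
Set Implicit Arguments. Unset Strict Implicit. Unset Printing Implicit Defensive.
Import Order.TTheory GRing.Theory Num.Theory.
Local Open Scope ring_scope.
Section MPolyGenerators.
Variables (R : comNzRingType) (n : nat).
Implicit Types (p q : {mpoly R[n]}).

Lemma mpoly_ind (Pr : {mpoly R[n]} -> Prop) :
  (forall c, Pr c%:MP) -> (forall i, Pr 'X_i) ->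
  (forall p q, Pr p -> Pr q -> Pr (p + q)) ->
  (forall p q, Pr p -> Pr q -> Pr (p * q)) ->
  forall p, Pr p.
Proof.
move=> PC PX PD PM p; rewrite [p]mpolyE.
apply: (big_ind Pr); [by rewrite -mpolyC0 | exact: (PD) | move=> m _].
rewrite -mul_mpolyC; apply: (PM) => //; rewrite mpolyXE_id.
apply: (big_ind Pr); [by rewrite -mpolyC1 | exact: (PM) | move=> i _].
by elim: (m i) => [|k IHk]; rewrite ?expr0 -?mpolyC1 // exprS; apply: PM.
Qed.

Lemma linear_commute_mulX_eq0 (T : {linear {mpoly R[n]} -> {mpoly R[n]}}) :
  (forall i p, T ('X_i * p) = 'X_i * T p) -> T 1 = 0 -> forall p, T p = 0.
Proof.
move=> TX T1 p; suff TM q r : T (q * r) = q * T r by rewrite -[p]mulr1 TM T1 mulr0.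
elim/mpoly_ind: q r => [c|i|q1 q2 IH1 IH2|q1 q2 IH1 IH2] r.
- by rewrite !mul_mpolyC linearZ.
- exact: TX.
- by rewrite mulrDl linearD IH1 IH2 mulrDl.
- by rewrite -mulrA IH1 IH2 mulrA.
Qed.

Lemma eq_lrmorph_mpolyX (F G : {lrmorphism {mpoly R[n]} -> {mpoly R[n]}}) :
  (forall i, F 'X_i = G 'X_i) -> F =1 G.
Proof.
move=> FG; elim/mpoly_ind => [c|i|p q IHp IHq|p q IHp IHq].
- by rewrite -alg_mpolyC !linearZ /= !rmorph1.
- exact: FG.
- by rewrite !linearD /= IHp IHq.
- by rewrite !rmorphM /= IHp IHq.
Qed.

Lemma mpolyXU_neq0 i : 'X_i != 0 :> {mpoly R[n]}.
Proof.
by apply/eqP => /(congr1 (mcoeff U_(i))); rewrite mcoeffXU eqxx mcoeff0 => /eqP; rewrite oner_eq0.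
Qed.

Lemma mpolyXU_subX_neq0 i j : i != j -> 'X_i - 'X_j != 0 :> {mpoly R[n]}.
Proof.
move=> ij; apply/eqP => /(congr1 (mcoeff U_(i))).
by rewrite mcoeffB mcoeff0 !mcoeffXU eqxx eq_sym (negbTE ij) subr0 => /eqP; rewrite oner_eq0.
Qed.

Lemma mpolyXU_addX_neq0 i j : i != j -> 'X_i + 'X_j != 0 :> {mpoly R[n]}.
Proof.
move=> ij; apply/eqP => /(congr1 (mcoeff U_(i))).
by rewrite mcoeffD mcoeff0 !mcoeffXU eqxx eq_sym (negbTE ij) addr0 => /eqP; rewrite oner_eq0.
Qed.

End MPolyGenerators.

Section MPolyMsize.
Variables (R : idomainType) (n : nat).
Implicit Types (p : {mpoly R[n]}).

Lemma msize_mulX_le i p : (msize ('X_i * p) <= (msize p).+1)%N.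
Proof.
have [->|p_neq0] := eqVneq p 0; first by rewrite mulr0 msize0.
by rewrite msizeM ?mpolyXU_neq0 // msizeX mdeg1.
Qed.

Lemma msize_msym_le (s : 'S_n) p : (msize (msym s p) <= msize p)%N.
Proof.
rewrite [X in (X <= _)%N]msizeE; apply/bigmax_leqP_seq => m.
rewrite mcoeff_msupp mcoeff_sym => m_supp _.
by rewrite -(mdeg_mperm m s) msize_mdeg_lt // mcoeff_msupp.
Qed.

Lemma msize_mderiv i p : (msize (mderiv i p) <= (msize p).-1)%N.
Proof.
rewrite [X in (X <= _)%N]msizeE; apply/bigmax_leqP_seq => m.
rewrite mcoeff_msupp mcoeff_mderiv => nz _.
have : (m + U_(i))%MM \in msupp p.
  by rewrite mcoeff_msupp; apply: contraNneq nz => ->; rewrite mul0rn.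
by move/msize_mdeg_lt; rewrite mdegD mdeg1; lia.
Qed.

End MPolyMsize.

Section LoweringExp.
Variables (R : numFieldType) (n : nat).
Notation P := {mpoly R[n]}.

Definition msize_lowering (T : P -> P) := forall p, (msize (T p) <= (msize p).-1)%N.

Variable T : {linear P -> P}.
Hypothesis T_lowering : msize_lowering T.

Lemma msize_iter_le k p : (msize (iter k T p) <= msize p - k)%N.
Proof.
elim: k => [|k IHk]; first by rewrite subn0.
by rewrite iterS subnS (leq_trans (T_lowering _)) // -!subn1 leq_sub2r.
Qed.

Lemma iter_lowering_eq0 k p : (msize p <= k)%N -> iter k T p = 0.
Proof.
move=> le_pk; apply/eqP; rewrite -msize_poly_eq0 -leqn0.
by apply: leq_trans (msize_iter_le k p) _; rewrite leqn0 subn_eq0.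
Qed.

(* The series [\sum_k T^k p / k!] terminates before [msize p] since [T] is lowering. *)
Definition opexp_trunc K p : P := \sum_(0 <= k < K) (k`!%:R)^-1 *: iter k T p.
Definition opexp p := opexp_trunc (msize p) p.

Lemma opexp_truncE K p : (msize p <= K)%N -> opexp_trunc K p = opexp p.
Proof.
rewrite /opexp /opexp_trunc => le_pK.
rewrite (big_cat_nat (leq0n _) le_pK) /= [X in _ + X]big1_seq ?addr0 // => k /andP[_].
by rewrite mem_index_iota => /andP[le_pk _]; rewrite iter_lowering_eq0 ?scaler0.
Qed.

Lemma iter_linear k : linear (iter k T).
Proof. by move=> a p q; elim: k => //= k ->; rewrite linearP. Qed.

Lemma opexp_trunc_linear K : linear (opexp_trunc K).
Proof.
move=> a p q; rewrite /opexp_trunc scaler_sumr -big_split; apply: eq_bigr => k _ /=.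
by rewrite iter_linear scalerDr !scalerA mulrC.
Qed.

Lemma opexp_linear : linear opexp.
Proof.
move=> a p q; set K := (msize (a *: p + q) + msize p + msize q)%N.
rewrite -(@opexp_truncE K) ?opexp_trunc_linear -?(@opexp_truncE K) //; rewrite /K; lia.
Qed.

Lemma opexp1 : opexp 1 = 1.
Proof. by rewrite /opexp /opexp_trunc msize1 big_nat1 invr1 scale1r. Qed.

Section Hadamard.
Variables X Y Z : {linear P -> P}.
Hypothesis TX : forall p, T (X p) = X (T p) + Y p.
Hypothesis TY : forall p, T (Y p) = Y (T p) + Z p.
Hypothesis TZ : forall p, T (Z p) = Z (T p).

Lemma iter_commute k p : iter k T (X p) =
  X (iter k T p) + k%:R *: Y (iter k.-1 T p) + 'C(k, 2)%:R *: Z (iter k.-2 T p).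
Proof.
elim: k => [|k IHk]; first by rewrite /= !scale0r !addr0.
rewrite iterS IHk !linearD !linearZ /= TX TY TZ.
rewrite !scaler_nat; case: k IHk => [|[|k]] _ /=.
- by rewrite (@bin_small 1 2) // bin0n !mulr0n !addr0.
- by rewrite (@bin_small 1 2) // binn mulr0n addr0 !mulr1n mulr2n !addrA.
- have shift (x y z : P) c m : x + y + (y + z) *+ m + z *+ c = x + y *+ m.+1 + z *+ (c + m).
    by rewrite mulrnDl mulrS mulrnDr !addrA [RHS]addrAC.
  by rewrite [in RHS]binS bin1 shift.
Qed.

Lemma opexp_commute p :
  opexp (X p) = X (opexp p) + Y (opexp p) + 2%:R^-1 *: Z (opexp p).
Proof.
have nat_neq0 k : k.+1%:R != 0 :> R by rewrite pnatr_eq0.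
have coefY k : (k.+1`!%:R)^-1 * k.+1%:R = (k`!%:R)^-1 :> R.
  by rewrite factS natrM invfM mulrAC mulVf ?mul1r.
have coefZ k : (k.+2`!%:R)^-1 * 'C(k.+2, 2)%:R = 2%:R^-1 * (k`!%:R)^-1 :> R.
  have bin2_nat : ('C(k.+2, 2) * 2 = k.+2 * k.+1)%N.
    by rewrite bin_ffact ffactSS ffactn1.
  have -> : 'C(k.+2, 2)%:R = k.+2%:R * k.+1%:R / 2%:R :> R.
    by rewrite -natrM -bin2_nat natrM mulfK.
  have fact_neq0 : k`!%:R != 0 :> R by rewrite pnatr_eq0 -lt0n fact_gt0.
  by rewrite !factS !natrM; field; rewrite fact_neq0 nat1r -natrD !pnatr_eq0.
set K := (msize (X p) + msize p)%N.
have le_pK : (msize p <= K)%N by rewrite leq_addl.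
rewrite -(@opexp_truncE K.+2 (X p)); last by rewrite /K leqW // leqW // leq_addr.

rewrite /opexp_trunc; under eq_bigr => k _ do rewrite iter_commute !(@scalerDr _ P).
rewrite !big_split /=; congr (_ + _ + _).
- rewrite -(opexp_truncE (leqW (leqW le_pK))) linear_sum.
  by apply: eq_bigr => k _; rewrite [RHS]linearZ.
- rewrite big_nat_recl // scale0r scaler0 add0r -(opexp_truncE (leqW le_pK)).
  by rewrite linear_sum; apply: eq_bigr => k _; rewrite [RHS]linearZ scalerA coefY.
- rewrite big_nat_recl // big_nat_recl // !scale0r !scaler0 !add0r.
  rewrite -(opexp_truncE le_pK) linear_sum scaler_sumr.
  by apply: eq_bigr => k _; rewrite [in RHS]linearZ !scalerA coefZ.
Qed.

End Hadamard.

End LoweringExp.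

Section TypeADunkl.
Variables (C : numClosedFieldType) (N : nat) (beta : nat).
Notation P := {mpoly C[N]}.
Implicit Types (f g p : P).

Lemma exdivP (d p q : P) : d != 0 -> d * q = p -> exdiv d p = q.
Proof.
move=> d_neq0 dq; apply: (mulfI d_neq0); rewrite dq.
exact: epsilon_spec (inhabits (0 : P)) (fun q => d * q = p) (ex_intro _ q dq).
Qed.

Fact swap_key : unit. Proof. by []. Qed.
Definition swap : 'I_N -> 'I_N -> P -> P := locked_with swap_key (@sw C N).

Lemma sw_swap : @sw C N = swap.
Proof. by rewrite /swap unlock. Qed.

Lemma swap_is_linear (i j : 'I_N) : linear (swap i j).
Proof. by move=> a p q; rewrite -sw_swap /sw msymD msymZ. Qed.

Lemma swap_is_multiplicative (i j : 'I_N) : multiplicative (swap i j).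
Proof. by rewrite -sw_swap; split=> [p q|]; rewrite /sw (msymM, msym1). Qed.

HB.instance Definition _ (i j : 'I_N) :=
  GRing.isLinear.Build C P P *:%R (swap i j) (swap_is_linear i j).
HB.instance Definition _ (i j : 'I_N) :=
  GRing.isMultiplicative.Build P P (swap i j) (swap_is_multiplicative i j).

Lemma swap_X (a b i : 'I_N) : swap a b 'X_i = 'X_(tperm a b i) :> P.
Proof. by rewrite -sw_swap /sw /msym mmapX mmap1U. Qed.

Lemma swap_C (a b : 'I_N) c : swap a b c%:MP = c%:MP :> P.
Proof. by rewrite -sw_swap /sw /msym mmapC. Qed.

Lemma swapC (a b : 'I_N) f : swap a b f = swap b a f.
Proof. by rewrite -sw_swap /sw tpermC. Qed.

Lemma swapJ (a b j k : 'I_N) f :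
  swap a b (swap j k f) = swap (tperm a b j) (tperm a b k) (swap a b f).
Proof. by rewrite -sw_swap /sw -!msymMm -tpermJ /conjg tpermV !mulgA tperm2 mul1g. Qed.

Lemma swapK (a b : 'I_N) : involutive (swap a b).
Proof. by move=> f; rewrite -sw_swap /sw -msymMm tperm2 msym1m. Qed.

Lemma msize_swap (a b : 'I_N) f : msize (swap a b f) = msize f.
Proof.
have le g : (msize (swap a b g) <= msize g)%N by rewrite -sw_swap msize_msym_le.
by apply/eqP; rewrite eqn_leq le /= -{1}[f](swapK a b) le.
Qed.

Lemma mderivXU (i j : 'I_N) : mderiv j ('X_i : P) = (i == j)%:R%:MP.
Proof.
rewrite mderivX mnm1E; case: eqP => [->|_]; last by rewrite scale0r mpolyC0.
have -> : (U_(j) - U_(j) = 0)%MM by apply/mnmP => l; rewrite mnmBE subnn mnmE.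
by rewrite mpolyX0 scale1r mpolyC1.
Qed.

Lemma mderiv_swap (a b j : 'I_N) f : swap a b (mderiv j f) = mderiv (tperm a b j) (swap a b f).
Proof.
elim/mpoly_ind: f => [c|i|p q IHp IHq|p q IHp IHq].
- by rewrite [in RHS]swap_C !mderivC linear0.
- by rewrite mderivXU swap_X mderivXU swap_C (inj_eq perm_inj).
- by rewrite !linearD /= IHp IHq.
- by rewrite mderivM rmorphM /= mderivM linearD !rmorphM /= IHp IHq.
Qed.

(* Divided difference (f - s_jk f) / (x_j - x_k); the junk value for j = k is 0. *)
Definition ddiff (j k : 'I_N) f : P :=
  if j == k then 0 else exdiv ('X_j - 'X_k) (f - swap j k f).

Lemma swap_sub_dvd (j k : 'I_N) f : exists q, f - swap j k f = ('X_j - 'X_k) * q.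
Proof.
elim/mpoly_ind: f => [c|i|p q [a ha] [b hb]|p q [a ha] [b hb]].
- by exists 0; rewrite swap_C subrr mulr0.
- rewrite swap_X; case: (tpermP j k i) => [->|->|_ _].
  + by exists 1; rewrite mulr1.
  + by exists (-1); rewrite mulrN1 opprB.
  + by exists 0; rewrite mulr0 subrr.
- by exists (a + b); rewrite linearD opprD addrACA ha hb mulrDr.
- exists (a * q + swap j k p * b).
  by rewrite rmorphM /= mulrDr mulrA -ha mulrCA -hb; ring.
Qed.

Lemma ddiff_uniq (j k : 'I_N) f q :
  j != k -> ('X_j - 'X_k) * q = f - swap j k f -> ddiff j k f = q.
Proof. by move=> jk; rewrite /ddiff (negbTE jk); apply: exdivP; rewrite mpolyXU_subX_neq0. Qed.

Lemma ddiffP (j k : 'I_N) f : j != k -> ('X_j - 'X_k) * ddiff j k f = f - swap j k f.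
Proof. by move=> jk; have [q hq] := swap_sub_dvd j k f; rewrite (ddiff_uniq jk (esym hq)) hq. Qed.

Lemma ddiff_is_linear (j k : 'I_N) : linear (ddiff j k).
Proof.
move=> a f g; have [<-|jk] := eqVneq j k; first by rewrite /ddiff eqxx scaler0 addr0.
by apply: ddiff_uniq => //; rewrite mulrDr -scalerAr !ddiffP // linearP /= scalerBr addrACA opprD.
Qed.

HB.instance Definition _ (j k : 'I_N) :=
  GRing.isLinear.Build C P P *:%R (ddiff j k) (ddiff_is_linear j k).

Lemma ddiff_mulX (j k l : 'I_N) f : l != j -> l != k ->
  ddiff j k ('X_l * f) = 'X_l * ddiff j k f.
Proof.
move=> lj lk; have [<-|jk] := eqVneq j k; first by rewrite /ddiff eqxx mulr0.
by apply: ddiff_uniq => //; rewrite rmorphM /= swap_X tpermD 1?eq_sym // mulrCA ddiffP // mulrBr.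
Qed.

Lemma ddiff_mulXl (j k : 'I_N) f : j != k ->
  ddiff j k ('X_j * f) = 'X_j * ddiff j k f + swap j k f.
Proof.
move=> jk; apply: ddiff_uniq => //.
by rewrite rmorphM /= swap_X tpermL mulrDr mulrCA ddiffP //; ring.
Qed.

Lemma ddiff_mulXr (j k : 'I_N) f : j != k ->
  ddiff j k ('X_k * f) = 'X_k * ddiff j k f - swap j k f.
Proof.
move=> jk; apply: ddiff_uniq => //.
by rewrite rmorphM /= swap_X tpermR mulrBr mulrCA ddiffP //; ring.
Qed.

Lemma ddiff_swap (a b j k : 'I_N) f :
  swap a b (ddiff j k f) = ddiff (tperm a b j) (tperm a b k) (swap a b f).
Proof.
have [<-|jk] := eqVneq j k; first by rewrite /ddiff !eqxx linear0.
have jk' : tperm a b j != tperm a b k by rewrite (inj_eq perm_inj).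
by symmetry; apply: ddiff_uniq => //; rewrite -!swap_X -linearB -rmorphM /= ddiffP // linearB /= (swapJ a b j k).
Qed.

Lemma msize_ddiff (j k : 'I_N) f : (msize (ddiff j k f) <= (msize f).-1)%N.
Proof.
have [<-|jk] := eqVneq j k; first by rewrite /ddiff eqxx msize0.
have [->|q_neq0] := eqVneq (ddiff j k f) 0; first by rewrite msize0.
have : (msize (f - swap j k f) <= msize f)%N.
  by rewrite (leq_trans (msizeD_le _ _)) // msizeN msize_swap maxnn.
rewrite -(ddiffP f jk) msizeM ?mpolyXU_subX_neq0 //.
have : U_(j)%MM \in msupp ('X_j - 'X_k : P).
  by rewrite mcoeff_msupp mcoeffB !mcoeffXU eqxx (eq_sym k) (negbTE jk) subr0 oner_eq0.
move/msize_mdeg_lt; rewrite mdeg1.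
by move: (msize (_ - _)) (msize (ddiff _ _ _)) (msize f) => a b c; lia.
Qed.

Definition swsum (j : 'I_N) f : P := \sum_(k < N | k != j) swap j k f.

Lemma swsum_is_linear j : linear (swsum j).
Proof.
move=> a f g; rewrite /swsum scaler_sumr -big_split.
by apply: eq_bigr => k _; rewrite linearP.
Qed.

HB.instance Definition _ j := GRing.isLinear.Build C P P *:%R (swsum j) (swsum_is_linear j).

Lemma swsum_swap (a b j : 'I_N) f : swap a b (swsum j f) = swsum (tperm a b j) (swap a b f).
Proof.
rewrite /swsum linear_sum [RHS](reindex_inj (@perm_inj _ (tperm a b))) /=.
by apply: eq_big => [k|k _]; rewrite ?(inj_eq perm_inj) // swapJ.
Qed.

Fact dunkl_key : unit. Proof. by []. Qed.
Definition dunkl : 'I_N -> P -> P := locked_with dunkl_key (@DA C N beta).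
Local Notation D := dunkl.

Lemma DA_dunkl : @DA C N beta = dunkl.
Proof. by rewrite /dunkl unlock. Qed.

Lemma dunkl_ddiff j f : D j f = mderiv j f + beta%:R *: \sum_(k < N | k != j) ddiff j k f.
Proof.
rewrite -DA_dunkl /DA sw_swap; congr (_ + _ *: _); apply: eq_bigr => k kj.
by rewrite /ddiff eq_sym (negbTE kj).
Qed.

Lemma dunkl_is_linear j : linear (D j).
Proof.
move=> a f g; rewrite !dunkl_ddiff linearP /=.
have -> : \sum_(k < N | k != j) ddiff j k (a *: f + g) =
          a *: \sum_(k < N | k != j) ddiff j k f + \sum_(k < N | k != j) ddiff j k g.
  by rewrite scaler_sumr -big_split; apply: eq_bigr => k _; rewrite linearP.
by rewrite scalerDr scalerA mulrC -scalerA scalerDr addrACA -scalerDr.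
Qed.

HB.instance Definition _ j := GRing.isLinear.Build C P P *:%R (D j) (dunkl_is_linear j).

Lemma msize_swsum j f : (msize (swsum j f) <= msize f)%N.
Proof.
rewrite (leq_trans (msize_sum _ _ _)) //; apply/bigmax_leqP => k _.
by rewrite msize_swap.
Qed.

Lemma dunkl_lowering j : msize_lowering (D j).
Proof.
move=> f; rewrite dunkl_ddiff (leq_trans (msizeD_le _ _)) // geq_max msize_mderiv.
rewrite (leq_trans (msizeZ_le _ _)) // (leq_trans (msize_sum _ _ _)) //.
by apply/bigmax_leqP => k _; rewrite msize_ddiff.
Qed.

Lemma dunkl1 j : D j 1 = 0.
Proof.
rewrite dunkl_ddiff -mpolyC1 mderivC add0r big1 ?scaler0 // => k kj.
by apply: ddiff_uniq; rewrite 1?eq_sym // swap_C subrr mulr0.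
Qed.

Lemma dunkl_swap (a b j : 'I_N) f : swap a b (D j f) = D (tperm a b j) (swap a b f).
Proof.
rewrite !dunkl_ddiff linearD linearZ /= mderiv_swap; congr (_ + _ *: _).
rewrite linear_sum [RHS](reindex_inj (@perm_inj _ (tperm a b))) /=.
by apply: eq_big => [k|k _]; rewrite ?(inj_eq perm_inj) // ddiff_swap.
Qed.

Lemma dunkl_swapD (a b j : 'I_N) f : j != a -> j != b -> swap a b (D j f) = D j (swap a b f).
Proof. by move=> ja jb; rewrite dunkl_swap tpermD // eq_sym. Qed.

Definition dunkl_X_comm (j i : 'I_N) f : P :=
  if i == j then f + beta%:R *: swsum j f else - (beta%:R *: swap j i f).

Lemma dunkl_mulX (j i : 'I_N) f : D j ('X_i * f) = 'X_i * D j f + dunkl_X_comm j i f.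
Proof.
rewrite !dunkl_ddiff mderivM mderivXU /dunkl_X_comm.
have [->|ij] := eqVneq i j.
  have -> : \sum_(k < N | k != j) ddiff j k ('X_j * f) =
            'X_j * \sum_(k < N | k != j) ddiff j k f + swsum j f.
    rewrite (eq_bigr (fun k => 'X_j * ddiff j k f + swap j k f)) => [|k kj].
      by rewrite big_split /= mulr_sumr.
    by rewrite ddiff_mulXl // eq_sym.
  by rewrite mulr1n mpolyC1 mul1r scalerDr mulrDr -scalerAr; ring.
have -> : \sum_(k < N | k != j) ddiff j k ('X_i * f) =
          'X_i * \sum_(k < N | k != j) ddiff j k f - swap j i f.
  rewrite (bigD1 i) //= [in RHS](bigD1 i) //= ddiff_mulXr; last by rewrite eq_sym.
  rewrite mulrDr addrAC mulr_sumr; congr (_ + _ + _).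
  by apply: eq_bigr => k /andP[kj ki]; rewrite ddiff_mulX // eq_sym.
by rewrite mulr0n mpolyC0 mul0r add0r scalerBr mulrDr -scalerAr addrA.
Qed.

Lemma swsumD1 (i k : 'I_N) f : k != i ->
  swsum i f = swap i k f + \sum_(l < N | (l != i) && (l != k)) swap i l f.
Proof. by move=> ki; rewrite /swsum (bigD1 k). Qed.

Lemma swsum_dunkl (i j : 'I_N) f : i != j ->
  swsum i (D j f) = D i (swap i j f) - D j (swap i j f) + D j (swsum i f).
Proof.
rewrite eq_sym => ji; rewrite (swsumD1 (D j f) ji) (swsumD1 f ji) dunkl_swap tpermR.
rewrite linearD linear_sum /= addrA subrK; congr (_ + _).
apply: eq_bigr => l /andP[li lj].
by rewrite dunkl_swapD // eq_sym.
Qed.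

Lemma dunkl_X_comm_cross (i j k : 'I_N) f :
  dunkl_X_comm i k (D j f) + D i (dunkl_X_comm j k f) =
  dunkl_X_comm j k (D i f) + D j (dunkl_X_comm i k f).
Proof.
have [<-|ij] := eqVneq i j; first by [].
wlog [ki|kij] : i j ij / k = i \/ k != i /\ k != j.
  move=> base; have [ki|ki] := eqVneq k i; first exact: base (or_introl ki).
  have [kj|kj] := eqVneq k j; last exact: base (or_intror (conj ki kj)).
  by apply/esym/base; rewrite 1?eq_sym //; left.
- rewrite /dunkl_X_comm ki eqxx (negbTE ij) !linearD !linearN !linearZ /=.
  rewrite swsum_dunkl // dunkl_swap tpermR (swapC j i).
  by ring.
- case: kij => ki kj; rewrite /dunkl_X_comm (negbTE ki) (negbTE kj) !linearN !linearZ /=.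
  have ji : j != i by rewrite eq_sym.
  have [ik jk] : i != k /\ j != k by rewrite !(eq_sym _ k).
  by rewrite !dunkl_swapD // addrC.
Qed.

Lemma dunkl_commutator_mulX (i j k : 'I_N) f :
  D i (D j ('X_k * f)) - D j (D i ('X_k * f)) = 'X_k * (D i (D j f) - D j (D i f)).
Proof.
rewrite !dunkl_mulX (linearD (D i)) (linearD (D j)) /= !dunkl_mulX -(addrA ('X_k * _)) dunkl_X_comm_cross.
by ring.
Qed.

Lemma dunkl_comm (i j : 'I_N) f : D i (D j f) = D j (D i f).
Proof.
apply/eqP; rewrite -subr_eq0; apply/eqP.
pose T : {linear P -> P} := (D i \o D j) \- (D j \o D i).
apply: (linear_commute_mulX_eq0 (T := T)) => [k g|]; first exact: dunkl_commutator_mulX.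
by rewrite /T /= !dunkl1 (linear0 (D i)) (linear0 (D j)) subrr.
Qed.

End TypeADunkl.

Section TypeALaguerre.
Variables (C : numClosedFieldType) (N : nat) (beta : nat) (gamma : C).
Notation P := {mpoly C[N]}.
Local Notation D := (@dunkl C N beta).
Local Notation S := (@swsum C N).
Local Notation K := (@dunkl_X_comm C N beta).
Implicit Types (f g : P).

Definition gammaA : C := gamma + 2%:R^-1.

Definition lagj (j : 'I_N) f : P :=
  gammaA *: D j f + 'X_j * D j (D j f) + beta%:R *: S j (D j f).

(* [lag] is the type-A Laguerre operator; [lagX j] is its commutator with [x_j]. *)
Definition lag f : P := \sum_(j < N) lagj j f.

Definition lagX (j : 'I_N) f : P := gammaA *: f + 2%:R *: ('X_j * D j f) + beta%:R *: S j f.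

Lemma lagj_is_linear j : linear (lagj j).
Proof.
move=> a f g; rewrite /lagj !linearP /=.
by rewrite -!mul_mpolyC; ring.
Qed.

HB.instance Definition _ j := GRing.isLinear.Build C P P *:%R (lagj j) (lagj_is_linear j).

Lemma lag_is_linear : linear lag.
Proof.
move=> a f g; rewrite /lag scaler_sumr -big_split.
by apply: eq_bigr => j _; rewrite linearP.
Qed.

HB.instance Definition _ := GRing.isLinear.Build C P P *:%R lag lag_is_linear.

Lemma lagX_is_linear j : linear (lagX j).
Proof. by move=> a f g; rewrite /lagX !linearP /= -!mul_mpolyC; ring. Qed.

HB.instance Definition _ j := GRing.isLinear.Build C P P *:%R (lagX j) (lagX_is_linear j).

Lemma lagj_swap (a b m : 'I_N) f : swap a b (lagj m f) = lagj (tperm a b m) (swap a b f).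
Proof. by rewrite /lagj !linearD !linearZ /= rmorphM /= swap_X !dunkl_swap swsum_swap dunkl_swap. Qed.

Lemma lag_swap (a b : 'I_N) f : lag (swap a b f) = swap a b (lag f).
Proof.
rewrite /lag linear_sum [RHS](reindex_inj (@perm_inj _ (tperm a b))) /=.
by apply: eq_bigr => k _; rewrite lagj_swap tpermK.
Qed.

Lemma lag_swsum i f : lag (S i f) = S i (lag f).
Proof. by rewrite /swsum linear_sum; apply: eq_bigr => k _; rewrite /= lag_swap. Qed.

Lemma lagjE j f : lagj j f = D j ('X_j * D j f) + (gammaA - 1) *: D j f.
Proof.
rewrite /lagj dunkl_mulX /dunkl_X_comm eqxx.
by rewrite -!mul_mpolyC mpolyCB mpolyC1; ring.
Qed.

Lemma lagj_dunkl k i f : lagj k (D i f) = D i (lagj k f) - D k (K i k (D k f)).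
Proof.
have e : D i (D k ('X_k * D k f)) = D k ('X_k * D k (D i f)) + D k (K i k (D k f)).
  by rewrite dunkl_comm dunkl_mulX linearD /= (dunkl_comm beta i k).
rewrite !lagjE linearD linearZ /= e (dunkl_comm beta i k).
by rewrite -!mul_mpolyC; ring.
Qed.

Lemma lag_dunkl i f : lag (D i f) = D i (lag f) - D i (D i f).
Proof.
rewrite /lag linear_sum (eq_bigr _ (fun k _ => lagj_dunkl k i f)) sumrB; congr (_ - _).
have off_diag k : k != i -> D k (K i k (D k f)) = - (beta%:R *: D i (swap i k (D i f))).
  move=> ki; rewrite /dunkl_X_comm (negbTE ki) linearN linearZ /=.
  by rewrite (dunkl_swap beta i k k) tpermR (dunkl_swap beta i k i) tpermL dunkl_comm.
rewrite (bigD1 i) //= (eq_bigr _ off_diag) sumrN -scaler_sumr.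
rewrite /dunkl_X_comm eqxx linearD linearZ /= /swsum linear_sum.
by rewrite addrK.
Qed.

Lemma lagj_mulX j i f : lagj j ('X_i * f) - 'X_i * lagj j f =
  K j i ('X_j * D j f) + D j ('X_j * K j i f) + (gammaA - 1) *: K j i f.
Proof.
have e : D j ('X_j * ('X_i * D j f + K j i f)) =
         'X_i * D j ('X_j * D j f) + K j i ('X_j * D j f) + D j ('X_j * K j i f).
  by rewrite mulrDr linearD /= mulrCA (dunkl_mulX _ j i).
rewrite !lagjE (dunkl_mulX _ j i f) e linearD /=.
by rewrite -!mul_mpolyC; ring.
Qed.

Lemma lagj_mulX_neq j i f : j != i -> lagj j ('X_i * f) - 'X_i * lagj j f =
  - (beta%:R *: ('X_i * D i (swap i j f))) - beta%:R *: ('X_j * D j (swap i j f))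
  - (beta%:R * gammaA) *: swap i j f - (beta%:R * beta%:R) *: S j (swap i j f).
Proof.
move=> ji; rewrite lagj_mulX /dunkl_X_comm eq_sym (negbTE ji).
rewrite rmorphM /= swap_X tpermL (dunkl_swap _ j i j) tpermL.
rewrite mulrN -scalerAr (linearN (D j)) (linearZZ (D j)) /= dunkl_mulX /dunkl_X_comm eqxx.
by rewrite !(swapC j i) -!mul_mpolyC !mpolyCM mpolyCB mpolyC1; ring.
Qed.

Lemma lagj_mulX_eq i f : lagj i ('X_i * f) - 'X_i * lagj i f =
  2%:R *: ('X_i * D i f) + gammaA *: f
  + beta%:R *: (\sum_(k < N | k != i) 'X_k * D k (swap i k f))
  + beta%:R *: ('X_i * \sum_(k < N | k != i) D i (swap i k f))
  + (beta%:R * (gammaA + 1)) *: S i f + (beta%:R * beta%:R) *: S i (S i f).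
Proof.
have e1 : S i ('X_i * D i f) = \sum_(k < N | k != i) 'X_k * D k (swap i k f).
  by apply: eq_bigr => k _; rewrite rmorphM /= swap_X tpermL dunkl_swap tpermL.
have e2 : D i (S i f) = \sum_(k < N | k != i) D i (swap i k f) by rewrite linear_sum.
rewrite lagj_mulX /dunkl_X_comm eqxx dunkl_mulX /dunkl_X_comm eqxx.
rewrite (linearD (D i)) (linearZZ (D i)) (linearD (swsum i)) (linearZZ (swsum i)) /= e1 e2.
move: (\sum_(k < N | k != i) _) (\sum_(k < N | k != i) D i _) => s1 s2.
by rewrite -!mul_mpolyC !mpolyCM mpolyCB (mpolyCD _ gammaA) !mpolyC1 !mpolyC_nat; ring.
Qed.

Lemma lag_mulX i f : lag ('X_i * f) = 'X_i * lag f + lagX i f.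
Proof.
apply/eqP; rewrite addrC -subr_eq; apply/eqP.
have -> : lag ('X_i * f) - 'X_i * lag f = \sum_(j < N) (lagj j ('X_i * f) - 'X_i * lagj j f).
  by rewrite /lag mulr_sumr sumrB.
rewrite (bigD1 i) //= lagj_mulX_eq (eq_bigr _ (fun j ji => lagj_mulX_neq f ji)).
have swsum2 : S i (S i f) = \sum_(j < N | j != i) S j (swap i j f).
  by rewrite {1}/swsum; apply: eq_bigr => j _; rewrite swsum_swap tpermL.
rewrite !sumrB sumrN -!scaler_sumr -mulr_sumr -swsum2 -/(swsum i f) /lagX.
by rewrite -!mul_mpolyC !mpolyCM (mpolyCD _ gammaA) !mpolyC1 !mpolyC_nat; ring.
Qed.

Lemma lag_mulX_dunkl i f : lag ('X_i * D i f) = 'X_i * D i (lag f) + lagj i f.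
Proof. by rewrite lag_mulX lag_dunkl /lagX /lagj -!mul_mpolyC !mpolyC_nat; ring. Qed.

Lemma lag_lagX i f : lag (lagX i f) = lagX i (lag f) + 2%:R *: lagj i f.
Proof.
rewrite /lagX !linearD !linearZ /= lag_mulX_dunkl lag_swsum /lagj.
by rewrite -!mul_mpolyC !mpolyC_nat; ring.
Qed.

Lemma lag_lagj i f : lag (lagj i f) = lagj i (lag f).
Proof.
rewrite {1}/lagj !linearD !linearZ /= lag_mulX_dunkl !lag_dunkl lag_swsum lag_dunkl.
rewrite !linearB /= [lagj i (D i f)]/lagj [lagj i (lag f)]/lagj.
by rewrite -!mul_mpolyC; ring.
Qed.

Lemma lagj_lowering j : msize_lowering (lagj j).
Proof.
move=> f; have D_low := @dunkl_lowering C N beta j.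
have DD_low : (msize ('X_j * D j (D j f)) <= (msize f).-1)%N.
  have [->|DDf_neq0] := eqVneq (D j (D j f)) 0; first by rewrite mulr0 msize0.
  have := msize_mulX_le j (D j (D j f)); have := D_low (D j f); have := D_low f.
  have : (0 < msize (D j (D j f)))%N by rewrite lt0n msize_poly_eq0.
  move: (msize f) (msize (D j f)) (msize (D j (D j f))) (msize (_ * _)) => a b c d.
  rewrite -!subn1; lia.
apply: leq_trans (msizeD_le _ _) _; rewrite geq_max; apply/andP; split.
  apply: leq_trans (msizeD_le _ _) _; rewrite geq_max DD_low andbT.
  exact: leq_trans (msizeZ_le _ _) (D_low _).
apply: leq_trans (msizeZ_le _ _) _; apply: leq_trans (msize_swsum _ _) _.
exact: D_low.
Qed.

Lemma lag_lowering : msize_lowering lag.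
Proof.
move=> f; rewrite (leq_trans (msize_sum _ _ _)) //; apply/bigmax_leqP => j _.
exact: lagj_lowering.
Qed.

End TypeALaguerre.

Section ExpLaguerre.
Variables (C : numClosedFieldType) (N : nat) (beta : nat) (gamma : C).
Notation P := {mpoly C[N]}.
Local Notation D := (@dunkl C N beta).
Local Notation L := (@lag C N beta gamma).
Implicit Types (f g : P).

Lemma neg_lag_lowering : msize_lowering (\- L).
Proof. by move=> f; rewrite /= msizeN lag_lowering. Qed.

Definition exp_neg_lag : P -> P := opexp (\- L).

HB.instance Definition _ := GRing.isLinear.Build C P P *:%R exp_neg_lag
  (opexp_linear neg_lag_lowering).

Lemma exp_neg_lag1 : exp_neg_lag 1 = 1.
Proof. exact: opexp1. Qed.

Lemma exp_neg_lag_mulX i f : exp_neg_lag ('X_i * f) =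
  'X_i * exp_neg_lag f - lagX beta gamma i (exp_neg_lag f) + lagj beta gamma i (exp_neg_lag f).
Proof.
rewrite /exp_neg_lag (opexp_commute neg_lag_lowering
  (X := 'X_i \*o idfun) (Y := \- lagX beta gamma i) (Z := 2%:R \*: lagj beta gamma i)) /=.
- by rewrite scalerA mulVf ?pnatr_eq0 // scale1r.
- by move=> g; rewrite lag_mulX opprD mulrN.
- by move=> g; rewrite linearN /= opprK lag_lagX linearN /= opprK.
- by move=> g; rewrite linearZ /= lag_lagj linearN /= scalerN.
Qed.

Lemma exp_neg_lag_mulX_dunkl i f :
  exp_neg_lag ('X_i * D i f) = 'X_i * D i (exp_neg_lag f) - lagj beta gamma i (exp_neg_lag f).
Proof.
rewrite /exp_neg_lag (opexp_commute neg_lag_lowering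
  (X := 'X_i \*o D i) (Y := \- lagj beta gamma i) (Z := \0)) /=.
- by rewrite scaler0 addr0.
- by move=> g; rewrite lag_mulX_dunkl opprD (linearN (D i)) mulrN.
- by move=> g; rewrite (linearN L) (linearN (lagj beta gamma i)) /= !opprK lag_lagj addr0.
- by move=> g; rewrite linear0 oppr0.
Qed.

Lemma exp_neg_lag_swap a b f : exp_neg_lag (swap a b f) = swap a b (exp_neg_lag f).
Proof.
rewrite /exp_neg_lag (opexp_commute neg_lag_lowering (X := swap a b) (Y := \0) (Z := \0)) /=.
- by rewrite scaler0 !addr0.
- by move=> g; rewrite lag_swap linearN addr0.
- by move=> g; rewrite linear0 oppr0 addr0.
- by move=> g; rewrite linear0 oppr0.
Qed.

End ExpLaguerre.

Section TypeBReduction.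
Variables (C : numClosedFieldType) (N : nat) (beta : nat) (gamma : C).
Notation P := {mpoly C[N]}.
Local Notation D := (@dunkl C N beta).
Local Notation S := (@swsum C N).
Implicit Types (f g u : P).

Fact sqsubst_key : unit. Proof. by []. Qed.
Definition sqsubst : P -> P :=
  locked_with sqsubst_key (comp_mpoly [tuple ('X_i ^+ 2 : P) | i < N]).

Lemma sqsubstE g : sqsubst g = g \mPo [tuple 'X_i ^+ 2 | i < N].
Proof. by rewrite /sqsubst unlock. Qed.

Lemma sqsubst_is_linear : linear sqsubst.
Proof. by move=> a p q; rewrite !sqsubstE linearP. Qed.

Lemma sqsubst_is_multiplicative : multiplicative sqsubst.
Proof. by split=> [p q|]; rewrite !sqsubstE (rmorphM, rmorph1). Qed.

HB.instance Definition _ := GRing.isLinear.Build C P P *:%R sqsubst sqsubst_is_linear.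
HB.instance Definition _ := GRing.isMultiplicative.Build P P sqsubst sqsubst_is_multiplicative.

Lemma sqsubst_X i : sqsubst 'X_i = 'X_i ^+ 2.
Proof. by rewrite sqsubstE comp_mpolyXU -tnth_nth tnth_mktuple. Qed.

Lemma sqsubst_C c : sqsubst c%:MP = c%:MP.
Proof. by rewrite sqsubstE comp_mpolyC. Qed.

HB.instance Definition _ (j : 'I_N) := GRing.LRMorphism.copy (@tflip C N j)
  (comp_mpoly [tuple (if i == j then - 'X_i else 'X_i : P) | i < N]).

Lemma tflip_X (j i : 'I_N) : tflip j ('X_i : P) = if i == j then - 'X_i else 'X_i.
Proof. by rewrite /tflip comp_mpolyXU -tnth_nth tnth_mktuple. Qed.

Lemma swap_sqsubst (a b : 'I_N) g : swap a b (sqsubst g) = sqsubst (swap a b g).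
Proof.
apply: (eq_lrmorph_mpolyX (F := swap a b \o sqsubst) (G := sqsubst \o swap a b)) => i /=.
by rewrite sqsubst_X rmorphXn /= !swap_X sqsubst_X.
Qed.

Lemma tflip_sqsubst (j : 'I_N) g : tflip j (sqsubst g) = sqsubst g.
Proof.
apply: (eq_lrmorph_mpolyX (F := tflip j \o sqsubst) (G := sqsubst)) => i /=.
by rewrite sqsubst_X rmorphXn /= tflip_X; case: eqP => // _; rewrite sqrrN.
Qed.

Lemma mderiv_sqsubst (j : 'I_N) g :
  mderiv j (sqsubst g) = 2%:R *: ('X_j * sqsubst (mderiv j g)).
Proof.
elim/mpoly_ind: g => [c|i|p q IHp IHq|p q IHp IHq].
- by rewrite sqsubst_C !mderivC linear0 mulr0 scaler0.
- rewrite sqsubst_X mderivXU sqsubst_C expr2 mderivM mderivXU.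
  by case: eqP => [->|_]; rewrite ?mulr1n ?mulr0n -!mul_mpolyC ?mpolyC_nat; ring.
- by rewrite !linearD /= IHp IHq mulrDr scalerDr.
- by rewrite !rmorphM /= !mderivM IHp IHq linearD /= !rmorphM /= -!mul_mpolyC mpolyC_nat; ring.
Qed.

Lemma sqsubst_ddiff (j k : 'I_N) u : j != k ->
  sqsubst u = sqsubst (swap j k u) + ('X_j ^+ 2 - 'X_k ^+ 2) * sqsubst (ddiff j k u).
Proof.
move=> jk; have := congr1 sqsubst (ddiffP u jk).
rewrite rmorphM /= (linearB sqsubst) /= !sqsubst_X (linearB sqsubst) /= => ->.
by rewrite addrC subrK.
Qed.

Lemma DBE (j : 'I_N) f : DB beta gamma j f = mderiv j f
  + beta%:R *: \sum_(k < N | k != j)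
       (exdiv ('X_j - 'X_k) (f - swap j k f)
        + exdiv ('X_j + 'X_k) (f - tflip j (tflip k (swap j k f))))
  + gamma *: exdiv 'X_j (f - tflip j f).
Proof. by rewrite /DB sw_swap. Qed.

Lemma DB_sqsubst (j : 'I_N) g : DB beta gamma j (sqsubst g) = 2%:R *: ('X_j * sqsubst (D j g)).
Proof.
have refl_term : exdiv 'X_j (sqsubst g - tflip j (sqsubst g)) = 0.
  by rewrite tflip_sqsubst subrr; apply: exdivP; rewrite ?mpolyXU_neq0 ?mulr0.
have pair_term k : k != j ->
    exdiv ('X_j - 'X_k) (sqsubst g - swap j k (sqsubst g))
  + exdiv ('X_j + 'X_k) (sqsubst g - tflip j (tflip k (swap j k (sqsubst g))))
  = 2%:R *: ('X_j * sqsubst (ddiff j k g)).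
  rewrite eq_sym => jk; have hg := sqsubst_ddiff g jk.
  rewrite swap_sqsubst !tflip_sqsubst.
  rewrite (exdivP (q := (('X_j + 'X_k) * sqsubst (ddiff j k g)))) ?mpolyXU_subX_neq0 //; last first.
    by rewrite [sqsubst g]hg; ring.
  rewrite (exdivP (q := (('X_j - 'X_k) * sqsubst (ddiff j k g)))) ?mpolyXU_addX_neq0 //; last first.
    by rewrite [sqsubst g]hg; ring.
  by rewrite -mul_mpolyC mpolyC_nat; ring.
rewrite DBE (eq_bigr _ pair_term) refl_term scaler0 addr0 -scaler_sumr -mulr_sumr.
rewrite dunkl_ddiff (linearD sqsubst) (linearZZ sqsubst) -(linear_sum sqsubst) /=.
by rewrite mderiv_sqsubst -!mul_mpolyC !mpolyC_nat; ring.
Qed.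

Lemma DB_X_sqsubst (j : 'I_N) u : DB beta gamma j ('X_j * sqsubst u) =
  2%:R *: sqsubst (gammaA gamma *: u + 'X_j * D j u + beta%:R *: S j u).
Proof.
have refl_term : exdiv 'X_j ('X_j * sqsubst u - tflip j ('X_j * sqsubst u)) = 2%:R *: sqsubst u.
  apply: exdivP; first exact: mpolyXU_neq0.
  by rewrite rmorphM /= tflip_X eqxx tflip_sqsubst -mul_mpolyC mpolyC_nat; ring.
have pair_term k : k != j ->
    exdiv ('X_j - 'X_k) ('X_j * sqsubst u - swap j k ('X_j * sqsubst u))
  + exdiv ('X_j + 'X_k) ('X_j * sqsubst u - tflip j (tflip k (swap j k ('X_j * sqsubst u))))
  = 2%:R *: ('X_j ^+ 2 * sqsubst (ddiff j k u)) + 2%:R *: sqsubst (swap j k u).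
  move=> kj; have jk : j != k by rewrite eq_sym.
  have hu := sqsubst_ddiff u jk.
  rewrite rmorphM /= swap_X tpermL swap_sqsubst !rmorphM /= !tflip_sqsubst !tflip_X eqxx.
  rewrite rmorphN /= tflip_X (negbTE kj).
  rewrite (exdivP (q := ('X_j * ('X_j + 'X_k) * sqsubst (ddiff j k u) + sqsubst (swap j k u))))
    ?mpolyXU_subX_neq0 //; last first.
    by rewrite [sqsubst u]hu; ring.
  rewrite (exdivP (q := ('X_j * ('X_j - 'X_k) * sqsubst (ddiff j k u) + sqsubst (swap j k u))))
    ?mpolyXU_addX_neq0 //; last first.
    by rewrite [sqsubst u]hu; ring.
  by rewrite -!mul_mpolyC mpolyC_nat; ring.
have two_gammaA : 2%:R * gammaA gamma = 2%:R * gamma + 1.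
  by rewrite /gammaA mulrDr mulfV ?pnatr_eq0.
rewrite DBE (eq_bigr _ pair_term) refl_term big_split /= -!scaler_sumr -mulr_sumr.
rewrite mderivM mderivXU eqxx mulr1n mpolyC1 mul1r mderiv_sqsubst.
rewrite !(linearD sqsubst) !(linearZZ sqsubst) rmorphM /= sqsubst_X.
rewrite dunkl_ddiff (linearD sqsubst) (linearZZ sqsubst) -!(linear_sum sqsubst) /=.
rewrite -/(swsum j u) !scalerDr (scalerA 2%:R (gammaA gamma)) two_gammaA.
by rewrite -!mul_mpolyC !mpolyCD !mpolyCM !mpolyC1 !mpolyC_nat; ring.
Qed.

(* [raiseA j u] is the type-A shadow of [bdag j] acting on [x_j * sqsubst u]. *)
Definition raiseA (j : 'I_N) u : P :=
  'X_j * u - gammaA gamma *: u - 'X_j * D j u - beta%:R *: S j u.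

Lemma raiseA_is_linear j : linear (raiseA j).
Proof. by move=> a f g; rewrite /raiseA !linearP /= -!mul_mpolyC; ring. Qed.

HB.instance Definition _ j := GRing.isLinear.Build C P P *:%R (raiseA j) (raiseA_is_linear j).

Lemma bdag_sqsubst (j : 'I_N) g :
  bdag beta gamma j (sqsubst g) = (2%:R / sqrtC 2%:R) *: ('X_j * sqsubst (g - D j g)).
Proof.
rewrite /bdag DB_sqsubst (linearB sqsubst) /=.
by rewrite -!mul_mpolyC !mpolyCM !mpolyC_nat; ring.
Qed.

Lemma bdag_X_sqsubst (j : 'I_N) u :
  bdag beta gamma j ('X_j * sqsubst u) = (2%:R / sqrtC 2%:R) *: sqsubst (raiseA j u).
Proof.
rewrite /bdag DB_X_sqsubst /raiseA !(linearB sqsubst) !(linearD sqsubst) !(linearZZ sqsubst).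
by rewrite !rmorphM /= !sqsubst_X -!mul_mpolyC !mpolyCM !mpolyC_nat; ring.
Qed.

Lemma raiseA_sub_dunkl (j : 'I_N) g :
  raiseA j (g - D j g) = 'X_j * g - lagX beta gamma j g + lagj beta gamma j g.
Proof.
rewrite /raiseA /lagX /lagj !linearB /=.
by rewrite -!mul_mpolyC !mpolyC_nat; ring.
Qed.

Lemma raiseA_dunkl (j : 'I_N) g : raiseA j (D j g) = 'X_j * D j g - lagj beta gamma j g.
Proof. by rewrite /raiseA /lagj -!mul_mpolyC; ring. Qed.

Lemma sqrt2_half_sq : (2%:R / sqrtC 2%:R) * (2%:R / sqrtC 2%:R) = 2%:R :> C.
Proof.
have two_neq0 : 2%:R != 0 :> C by rewrite pnatr_eq0.
have sqrt2_sq : sqrtC 2%:R * sqrtC 2%:R = 2%:R :> C by rewrite -expr2 sqrtCK.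
by rewrite mulrACA -invfM sqrt2_sq mulfK.
Qed.

Lemma bdag2half_sqsubst (j : 'I_N) g : bdag2half beta gamma j (sqsubst g) =
  sqsubst ('X_j * g - lagX beta gamma j g + lagj beta gamma j g).
Proof.
rewrite /bdag2half bdag_sqsubst scalerAr -(linearZZ sqsubst) bdag_X_sqsubst.
rewrite (linearZZ (raiseA j)) (linearZZ sqsubst) !scalerA -mulrA sqrt2_half_sq.
rewrite mulVf ?pnatr_eq0 // scale1r.
by rewrite /= raiseA_sub_dunkl.
Qed.

Lemma hB_sqsubst (j : 'I_N) g : 2%:R^-1 *: hB beta gamma j (sqsubst g) =
  sqsubst ('X_j * D j g - lagj beta gamma j g + beta%:R *: \sum_(k < N | (k < j)%N) swap j k g).
Proof.
have refl_sum : \sum_(k < N | (k < j)%N)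
    (swap j k (sqsubst g) + tflip j (tflip k (swap j k (sqsubst g))))
  = 2%:R *: \sum_(k < N | (k < j)%N) sqsubst (swap j k g).
  rewrite scaler_sumr; apply: eq_bigr => k _; rewrite swap_sqsubst !tflip_sqsubst.
  by rewrite -mul_mpolyC mpolyC_nat; ring.
have bdag_part : bdag beta gamma j ((sqrtC 2%:R)^-1 *: (2%:R *: ('X_j * sqsubst (D j g)))) =
                 2%:R *: sqsubst (raiseA j (D j g)).
  rewrite scalerA (mulrC _ 2%:R) scalerAr -(linearZZ sqsubst) bdag_X_sqsubst.
  by rewrite (linearZZ (raiseA j)) (linearZZ sqsubst) scalerA sqrt2_half_sq.
rewrite /hB /bann DB_sqsubst sw_swap refl_sum bdag_part raiseA_dunkl.
rewrite [RHS](linearD sqsubst) /= [in RHS](linearZZ sqsubst) [in RHS](linear_sum sqsubst) /=.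
rewrite (scalerA beta%:R 2%:R) (mulrC beta%:R) -scalerA -scalerDr scalerA.
by rewrite mulVf ?pnatr_eq0 // scale1r.
Qed.

End TypeBReduction.

Arguments sqsubst {C N}.

Section Intertwining.
Variables (C : numClosedFieldType) (N : nat) (beta : nat) (gamma : C).
Notation P := {mpoly C[N]}.
Local Notation E := (@exp_neg_lag C N beta gamma).
Implicit Types (f g : P).

Lemma iter_bdag2half_sqsubst (j : 'I_N) n g :
  iter n (bdag2half beta gamma j) (sqsubst (E g)) = sqsubst (E ('X_j ^+ n * g)).
Proof.
elim: n => [|n IHn] /=; first by rewrite expr0 mul1r.
by rewrite IHn bdag2half_sqsubst -exp_neg_lag_mulX exprS mulrA.
Qed.

Lemma mono_op_sqsubst m g :
  mono_op beta gamma m (sqsubst (E g)) = sqsubst (E ('X_[m] * g)).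
Proof.
rewrite /mono_op mpolyXE_id -big_enum /=.
elim: (enum 'I_N) => [|j l IHl] /=; first by rewrite big_nil mul1r.
by rewrite IHl iter_bdag2half_sqsubst big_cons mulrA.
Qed.

Lemma sigmaB_sqsubst f : sigmaB beta gamma f = sqsubst (E f).
Proof.
rewrite /sigmaB [in RHS](mpolyE f) (linear_sum E) (linear_sum sqsubst).
apply: eq_bigr => m _.
by rewrite -(rmorph1 sqsubst) -(@exp_neg_lag1 C N beta gamma) mono_op_sqsubst mulr1 !linearZ.
Qed.

Lemma sigmaB_actA (Q : H0expr C N) f :
  sigmaB beta gamma (actA beta Q f) = rhoB beta gamma Q (sigmaB beta gamma f).
Proof.
rewrite !sigmaB_sqsubst; elim: Q f => [j|i j||a IHa b IHb|c a IHa|a IHa b IHb] f /=.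
- rewrite hB_sqsubst /hatDA DA_dunkl linearD linearZ /= exp_neg_lag_mulX_dunkl linear_sum.
  congr (sqsubst (_ + _ *: _)); rewrite sw_swap (linear_sum E).
  by apply: eq_bigr => k _; rewrite /= exp_neg_lag_swap.
- by rewrite sw_swap /= exp_neg_lag_swap swap_sqsubst.
- by [].
- by rewrite !linearD /= IHa IHb.
- by rewrite !linearZ /= IHa.
- by rewrite IHa IHb.
Qed.

End Intertwining.

Theorem theorem2p9 (C : numClosedFieldType) (N : nat) (beta : nat) (gamma : C) :
  (0 < N)%N ->
  forall (Q : H0expr C N) (f : {mpoly C[N]}),
    sigmaB beta gamma (actA beta Q f) = rhoB beta gamma Q (sigmaB beta gamma f).
Proof. by move=> _ Q f; apply: sigmaB_actA. Qed.
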